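(* Let $k$ be a field of prime characteristic $p$. Define $T$-spaces of $k_0\langle X\rangle$ by $H_1=\{x_1^p\}^S$ and $H_{n+1}=(H_nH_1)^S$ for $n\ge1$. Then for every $m\ge1$, every $u\in H_m$ and every $v\in k_0\langle X\rangle$, $[u,v]=uv-vu\in H_m$.
   Context: $X=\{x_1,x_2,\ldots\}$ is countably infinite; $k_0\langle X\rangle$ is the free associative (non-unital) $k$-algebra on $X$. A $T$-space is a $k$-subspace of $k_0\langle X\rangle$ invariant under every algebra endomorphism of $k_0\langle X\rangle$; $(A)^S$ is the $T$-space generated by a subset $A$. For subsets $A,B$, $AB=\{ab:a\in A,b\in B\}$. *)

From HB Require Import structures.
From mathcomp Require Import all_boot all_algebra.
From mathcomp Require Import monalg.
Set Implicit Arguments. Unset Strict Implicit. Unset Printing Implicit Defensive.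
Import GRing.Theory.
Local Open Scope ring_scope.

(* Free unital associative algebra k<X> on X = {x_i | i : nat}:
   k-linear combinations of words (free monoid on nat). *)
Definition FA (k : fieldType) := {malg k[{fmonom nat}]}.

Definition xvar (k : fieldType) (i : nat) : FA k := << fmu i >>.

(* k_0<X> = the non-unital free algebra = elements with zero constant term *)
Definition in_k0 (k : fieldType) (f : FA k) : Prop := f@_(fmone nat) = 0.

Definition is_subspace (k : fieldType) (W : FA k -> Prop) : Prop :=
  (forall u, W u -> in_k0 u) /\ W 0 /\
  (forall u v, W u -> W v -> W (u + v)) /\
  (forall (c : k) u, W u -> W (c *: u)).

(* algebra endomorphism of k_0<X> (only its values on k_0<X> matter) *)
Definition is_endo (k : fieldType) (phi : FA k -> FA k) : Prop :=
  forall u v, in_k0 u -> in_k0 v ->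
    [/\ in_k0 (phi u), phi (u + v) = phi u + phi v,
        (forall c : k, phi (c *: u) = c *: phi u) &
        phi (u * v) = phi u * phi v].

Definition is_Tspace (k : fieldType) (W : FA k -> Prop) : Prop :=
  is_subspace W /\ (forall phi, is_endo phi -> forall u, W u -> W (phi u)).

Definition Tgen (k : fieldType) (A : FA k -> Prop) : FA k -> Prop :=
  fun u => forall W, is_Tspace W -> (forall a, A a -> W a) -> W u.

Definition setmul (k : fieldType) (A B : FA k -> Prop) : FA k -> Prop :=
  fun u => exists a b, [/\ A a, B b & u = a * b].

(* Hs p n = H_(n+1): H_1 = {x_1^p}^S, H_(n+1) = (H_n H_1)^S *)
Definition H1 (k : fieldType) (p : nat) : FA k -> Prop :=
  Tgen (fun u => u = xvar k 1 ^+ p).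

Definition Hs (k : fieldType) (p : nat) : nat -> FA k -> Prop :=
  fix go (n : nat) : FA k -> Prop :=
  match n with
  | 0 => @H1 k p
  | n'.+1 => Tgen (setmul (go n') (@H1 k p))
  end.

Definition H (k : fieldType) (p : nat) (m : nat) : FA k -> Prop := @Hs k p m.-1.

From HB Require Import structures.
From mathcomp Require Import all_boot all_algebra.
From mathcomp Require Import monalg zify.
Import GRing.Theory.
Local Open Scope ring_scope.

(* Commutation with a fixed [v] is linear, so [(A)^S] is closed under it as
   soon as [phi a * v - v * phi a] lies in [(A)^S] for every generator [a]
   and endomorphism [phi].  For [H_(n+1)] the generators are products [b c]
   with [b] in [H_n] and [c] in [H_1], and the Leibniz rule
   [[b c, v] = b [c, v] + [b, v] c] reduces everything to [H_1], i.e. to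
   [[g^p, v] \in H_1].  With [w = [g, v]] and a scalar [c] one has
   [(g + c w)^p = sum_i c^i q_i] where [q_0 = g^p], [q_p = w^p] and
   [q_1 = [g^p, v]].  Since [H_1] contains all [p]-th powers, weighting
   these identities for [c = 1, ..., p-1] by [c^-1] and using
   [sum_(c in F_p) c^e = 0] for [0 < e < p - 1] expresses [q_1] through
   elements of [H_1]. *)

Section PowerSums.
Context {F : fieldType} {p : nat}.
Hypothesis charFp : p \in [pchar F].

Let p_gt0 : (0 < p)%N := prime_gt0 (pcharf_prime charFp).

Lemma natr_inj_lt_pchar [i j : nat] :
  (i < p)%N -> (j < p)%N -> i%:R = j%:R :> F -> i = j.
Proof.
wlog le_ij : i j / (i <= j)%N => [wlog_ij lt_ip lt_jp eq_ij|_ lt_jp eq_ij].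
  by case/orP: (leq_total i j) => ?; [|symmetry]; apply: wlog_ij.
have: (p %| j - i)%N by rewrite (dvdn_pcharf charFp) natrB // eq_ij subrr.
rewrite /dvdn modn_small; last exact: leq_ltn_trans (leq_subr _ _) lt_jp.
by rewrite subn_eq0 => le_ji; apply/eqP; rewrite eqn_leq le_ij.
Qed.

Lemma natr_neq0_lt_pchar [a : nat] : (0 < a < p)%N -> a%:R != 0 :> F.
Proof.
case/andP=> a_gt0 lt_ap; apply/eqP => /(natr_inj_lt_pchar lt_ap p_gt0) a0.
by rewrite a0 in a_gt0.
Qed.

Lemma exists_natr_expr_neq1 [e : nat] : (0 < e < p.-1)%N ->
  exists2 a : nat, (0 < a < p)%N & (a%:R : F) ^+ e != 1.
Proof.
case/andP=> e_gt0 lt_e_p1.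
pose s := [seq (a%:R : F) | a <- iota 1 p.-1].
have uniq_s : uniq s.
  rewrite map_inj_in_uniq ?iota_uniq // => i j; rewrite !mem_iota => ? ?.
  by apply: natr_inj_lt_pchar; lia.
have [roots_s|] := boolP (all (root ('X^e - 1%:P)) s).
  have := max_poly_roots _ roots_s uniq_s.
  rewrite -size_poly_eq0 !size_XnsubC // size_map size_iota => /(_ isT).
  lia.
case/allPn=> x /mapP[a]; rewrite mem_iota => a_range -> not_root.
by exists a; [lia | rewrite /root !hornerE subr_eq0 in not_root].
Qed.

(* Multiplication by a unit [a] of the prime field permutes [0, ..., p-1],
   so the power sum is fixed by the factor [a ^+ e], which is not 1. *)
Lemma sum_natr_expr_pchar (e : nat) : (0 < e < p.-1)%N ->
  \sum_(j < p) (j%:R : F) ^+ e = 0.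
Proof.
move=> e_range; have [a a_range a_e] := exists_natr_expr_neq1 e_range.
have a_neq0 := natr_neq0_lt_pchar a_range.
pose mul_a (j : 'I_p) := Ordinal (ltn_pmod (a * j) p_gt0).
have natr_mul_a j : (mul_a j)%:R = a%:R * j%:R :> F.
  by rewrite GRing.natr_mod_pchar // natrM.
have mul_a_inj : injective mul_a.
  move=> i j /(congr1 (fun n : 'I_p => n%:R : F)); rewrite !natr_mul_a.
  by move/(mulfI a_neq0)/(natr_inj_lt_pchar (ltn_ord i) (ltn_ord j))/val_inj.
set S := \sum_(j < p) _.
have: S = a%:R ^+ e * S.
  rewrite {1}/S (reindex_inj mul_a_inj) mulr_sumr.
  by apply: eq_bigr => j _; rewrite natr_mul_a exprMn.
move/eqP; rewrite -subr_eq0 -{1}[S]mul1r -mulrBl mulf_eq0 subr_eq0 eq_sym.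
by rewrite (negbTE a_e) => /eqP.
Qed.

Lemma sum_natr_inv_mul_natr : \sum_(j < p) (j%:R : F)^-1 * j%:R = -1.
Proof.
rewrite -(prednK p_gt0) big_ord_recl invr0 mul0r add0r.
rewrite (eq_bigr (fun _ => 1)) => [|j _]; last first.
  by rewrite mulVf // natr_neq0_lt_pchar //= /bump /=; have := ltn_ord j; lia.
rewrite sumr_const card_ord; apply/eqP.
by rewrite -addr_eq0 -mulrSr prednK // (pcharf0 charFp).
Qed.

Lemma sum_natr_inv_scale_polyval (V : lmodType F) (q : nat -> V) :
  exists a b : F, \sum_(j < p) (j%:R)^-1 *: \sum_(i < p.+1) (j%:R) ^+ i *: q i
                  = a *: q 0%N - q 1%N + b *: q p.
Proof.
pose alpha i := \sum_(j < p) (j%:R : F)^-1 * j%:R ^+ i.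
have alpha_mid i : (1 < i < p)%N -> alpha i = 0.
  move=> i_range; rewrite -(sum_natr_expr_pchar i.-1); last lia.
  apply: eq_bigr => j _; have [->|j_neq0] := eqVneq (j%:R : F) 0.
    by rewrite invr0 mul0r expr0n; case: i i_range => [|[|]].
  by case: i i_range => // i _; rewrite exprS mulKf.
exists (alpha 0%N), (alpha p).
rewrite (eq_bigr (fun j : 'I_p =>
    \sum_(i < p.+1) ((j%:R)^-1 * j%:R ^+ i) *: q i));
  last by move=> j _; rewrite scaler_sumr; apply: eq_bigr => i _; rewrite scalerA.
rewrite exchange_big /=; under eq_bigr do rewrite -scaler_suml.
have p_gt1 := prime_gt1 (pcharf_prime charFp).
rewrite -(big_mkord xpredT (fun i => alpha i *: q i)) big_ltn // big_ltn //.
rewrite big_nat_recr //= big1_seq ?add0r => [|i /andP[_]]; last first.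
  by rewrite mem_index_iota => /alpha_mid ->; rewrite scale0r.
rewrite /alpha; under [X in X *: q 1%N]eq_bigr do rewrite expr1.
by rewrite sum_natr_inv_mul_natr scaleN1r addrA.
Qed.

End PowerSums.

Section LinearPolyPowers.
Variables (R : nzRingType) (a b : R).
Let P : {poly R} := b%:P * 'X + a%:P.

Lemma size_linear_exp n : (size (P ^+ n) <= n.+1)%N.
Proof.
have size_P : ((size P).-1 <= 1)%N.
  by rewrite /P size_MXaddC; case: ifP => //= _; rewrite size_polyC; case: eqP.
apply: leq_trans (size_poly_exp_leq _ _) _.
by rewrite ltnS -[leqRHS]mul1n leq_mul.
Qed.

Lemma coef_linear_expS n i :
  (P ^+ n.+1)`_i = (P ^+ n)`_i * a + (if i is i'.+1 then (P ^+ n)`_i' * b else 0).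
Proof.
rewrite exprSr mulrDr coefD coefMC mulrA coefMX.
by case: i => [|i]; rewrite ?coefMC addrC.
Qed.

Lemma coef_linear_exp0 n : (P ^+ n)`_0 = a ^+ n.
Proof.
elim: n => [|n IHn]; first by rewrite !expr0 coefC.
by rewrite coef_linear_expS IHn addr0 exprSr.
Qed.

Lemma coef_linear_expn n : (P ^+ n)`_n = b ^+ n.
Proof.
elim: n => [|n IHn]; first by rewrite !expr0 coefC.
rewrite coef_linear_expS IHn exprSr nth_default ?mul0r ?add0r //.
exact: size_linear_exp.
Qed.

Lemma coef_linear_exp1 (v : R) n : b = a * v - v * a ->
  (P ^+ n)`_1 = a ^+ n * v - v * a ^+ n.
Proof.
move=> def_b; elim: n => [|n IHn].
  by rewrite !expr0 coefC mul1r mulr1 subrr.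
rewrite coef_linear_expS IHn coef_linear_exp0 def_b !exprSr.
by rewrite mulrBl mulrBr !mulrA addrC addrA subrK.
Qed.

Lemma linear_exp_horner (x : R) n : (forall y, x * y = y * x) ->
  (b * x + a) ^+ n = \sum_(i < n.+1) (P ^+ n)`_i * x ^+ i.
Proof.
move=> x_central.
have P_x : P.[x] = b * x + a by rewrite /P hornerD hornerC hornerMX hornerC.
rewrite -P_x -horner_exp_comm ?(horner_coef_wide _ (size_linear_exp n)) //.
Qed.

End LinearPolyPowers.

Section MalgScalars.
Variables (K : monomType) (R : comNzRingType).
Implicit Types (c : R) (f g : {malg R[K]}).

Lemma malgC_comm c g : c%:MP * g = g * c%:MP.
Proof.
rewrite !malgM_def fgmulUg fgmulgU; apply: eq_bigr => m _.
by rewrite mul1m mulm1 mulrC.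
Qed.

Lemma malg_scalerAr c f g : f * (c *: g) = c *: (f * g).
Proof. by rewrite -!mul_malgC mulrA -malgC_comm mulrA. Qed.

End MalgScalars.

Section NonUnitalPart.
Context {k : fieldType}.
Local Notation F := (FA k).
Implicit Types (f g u v : F) (phi psi : F -> F) (A W : F -> Prop).

Lemma in_k00 : in_k0 (0 : F). Proof. by rewrite /in_k0 mcoeff0. Qed.

Lemma in_k0D f g : in_k0 f -> in_k0 g -> in_k0 (f + g).
Proof. by rewrite /in_k0 mcoeffD => -> ->; rewrite addr0. Qed.

Lemma in_k0Z (c : k) f : in_k0 f -> in_k0 (c *: f).
Proof. by rewrite /in_k0 mcoeffZ => ->; rewrite mulr0. Qed.

Lemma in_k0B f g : in_k0 f -> in_k0 g -> in_k0 (f - g).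
Proof.
by move=> f0 g0; rewrite -scaleN1r; apply: in_k0D => //; apply: in_k0Z.
Qed.

Lemma in_k0M f g : in_k0 f -> in_k0 g -> in_k0 (f * g).
Proof.
rewrite /in_k0 -[fmone nat]/(@one (fmonom nat)) => f0 g0.
by rewrite (mcoeff1g_is_multiplicative _ _).1 f0 mul0r.
Qed.

Lemma in_k0X f n : in_k0 f -> in_k0 (f ^+ n.+1).
Proof.
by move=> f0; elim: n => [|n IHn]; rewrite ?expr1 // exprS; apply: in_k0M.
Qed.

Lemma in_k0_xvar i : in_k0 (xvar k i).
Proof. by rewrite /in_k0 /xvar mcoeffU1 fmP fmoneE fmuE. Qed.

Lemma subspace0 [W] : is_subspace W -> W 0.
Proof. by case=> _ []. Qed.

Lemma subspaceD [W f g] : is_subspace W -> W f -> W g -> W (f + g).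
Proof. by case=> _ [_ []] WD _; apply: WD. Qed.

Lemma subspaceZ [W] (c : k) [f] : is_subspace W -> W f -> W (c *: f).
Proof. by case=> _ [_ [_]] WZ; apply: WZ. Qed.

Lemma subspaceB [W f g] : is_subspace W -> W f -> W g -> W (f - g).
Proof.
by move=> W_sub Wf Wg; rewrite -scaleN1r; apply: subspaceD => //; apply: subspaceZ.
Qed.

Lemma subspace_sum W (I : Type) (r : seq I) (P : pred I) (F_ : I -> F) :
  is_subspace W -> (forall i, P i -> W (F_ i)) -> W (\sum_(i <- r | P i) F_ i).
Proof.
move=> W_sub WF; elim/big_rec: _ => [|i f Pi Wf]; first exact: subspace0.
exact: subspaceD (WF i Pi) Wf.
Qed.

Lemma endo_k0 [phi f] : is_endo phi -> in_k0 f -> in_k0 (phi f).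
Proof. by move=> phi_endo f0; case: (phi_endo f f f0 f0). Qed.

Lemma endoD [phi f g] :
  is_endo phi -> in_k0 f -> in_k0 g -> phi (f + g) = phi f + phi g.
Proof. by move=> phi_endo f0 g0; case: (phi_endo f g f0 g0). Qed.

Lemma endoZ [phi] (c : k) [f] :
  is_endo phi -> in_k0 f -> phi (c *: f) = c *: phi f.
Proof. by move=> phi_endo f0; case: (phi_endo f f f0 f0). Qed.

Lemma endoM [phi f g] :
  is_endo phi -> in_k0 f -> in_k0 g -> phi (f * g) = phi f * phi g.
Proof. by move=> phi_endo f0 g0; case: (phi_endo f g f0 g0). Qed.

Lemma endo0 phi : is_endo phi -> phi 0 = 0.
Proof.
move=> phi_endo; apply: (@addrI _ (phi 0)).
by rewrite -endoD ?addr0 //; exact: in_k00.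
Qed.

Lemma endoX phi f n : is_endo phi -> in_k0 f -> phi (f ^+ n.+1) = phi f ^+ n.+1.
Proof.
move=> phi_endo f0; elim: n => [|n IHn]; first by rewrite !expr1.
by rewrite exprS endoM ?IHn -?exprS //; exact: in_k0X.
Qed.

Lemma endo_id : is_endo (@id F).
Proof. by []. Qed.

Lemma endo_comp [phi psi] : is_endo phi -> is_endo psi -> is_endo (phi \o psi).
Proof.
move=> phi_endo psi_endo f g f0 g0.
have [psi_f0 psi_g0] := (endo_k0 psi_endo f0, endo_k0 psi_endo g0).
split=> /=; first exact: endo_k0.
- by rewrite !endoD.
- by move=> c; rewrite !endoZ.
- by rewrite !endoM.
Qed.

Lemma Tspace_endo [W phi f] : is_Tspace W -> is_endo phi -> W f -> W (phi f).
Proof. by case=> _ W_endo phi_endo; apply: W_endo. Qed.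

Lemma in_k0_Tspace : is_Tspace (@in_k0 k).
Proof.
split; last by move=> phi phi_endo f; apply: endo_k0.
by split=> //; split; [exact: in_k00 | split; [exact: in_k0D | exact: in_k0Z]].
Qed.

Lemma Tgen_incl A a : A a -> Tgen A a.
Proof. by move=> Aa W _; apply. Qed.

Lemma Tgen_k0 [A f] : (forall a, A a -> in_k0 a) -> Tgen A f -> in_k0 f.
Proof. by move=> A_k0; apply; [exact: in_k0_Tspace | exact: A_k0]. Qed.

Lemma Tgen_Tspace [A] : (forall a, A a -> in_k0 a) -> is_Tspace (Tgen A).
Proof.
move=> A_k0; split; last first.
  move=> phi phi_endo f Af W W_T A_W.
  exact: Tspace_endo W_T phi_endo (Af W W_T A_W).
split; first by move=> f; apply: Tgen_k0.
split; first by move=> W [W_sub _] _; exact: subspace0.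
split=> [f g Af Ag|c f Af] W W_T A_W; have [W_sub _] := W_T.
  exact: subspaceD (Af W W_T A_W) (Ag W W_T A_W).
exact: subspaceZ (Af W W_T A_W).
Qed.

Definition monom_pow f (m : fmonom nat) : F := f ^+ size m.

Lemma monom_pow_is_mmorphism f : mmorphism (monom_pow f).
Proof. by split=> [m1 m2|]; rewrite /monom_pow ?fmM ?size_cat ?exprD ?fm1. Qed.

HB.instance Definition _ f :=
  isMultiplicative.Build (fmonom nat) F (monom_pow f) (monom_pow_is_mmorphism f).

Definition subst_xvars f : F -> F := mmap (@malgC (fmonom nat) k) (monom_pow f).

Lemma subst_xvarsE f i : subst_xvars f (xvar k i) = f.
Proof.
by rewrite /subst_xvars /xvar mmapU /= mpolyC1E mul1r /monom_pow fmU expr1.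
Qed.

Lemma subst_xvars_endo [f] : in_k0 f -> is_endo (subst_xvars f).
Proof.
move=> f0 u v u0 v0; split=> [||c|].
- rewrite /in_k0 -[fmone nat]/(@one (fmonom nat)) /subst_xvars mmapE raddf_sum.
  apply: big1 => m _ /=; rewrite mcoeffCM /monom_pow.
  have [->|] := eqVneq m (@one (fmonom nat)); first by rewrite u0 mul0r.
  rewrite -fdeg_eq0 fdegE; case: (size m) => // n _.
  by rewrite (in_k0X f n f0) mulr0.
- exact: mmapD.
- by rewrite /subst_xvars mmapZ mul_malgC.
- exact: (commr_mmap_is_multiplicative (fun _ _ _ => malgC_comm _ _ _ _)).1.
Qed.

Lemma Tspace_expr [W] i n f :
  is_Tspace W -> W (xvar k i ^+ n.+1) -> in_k0 f -> W (f ^+ n.+1).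
Proof.
move=> W_T W_xn f0; have subst_endo := subst_xvars_endo f0.
rewrite -(subst_xvarsE f i) -endoX //; last exact: in_k0_xvar.
exact: Tspace_endo.
Qed.

Lemma subspace_commutator_expr W p g v : p \in [pchar k] -> is_subspace W ->
  (forall f, in_k0 f -> W (f ^+ p)) -> in_k0 g -> in_k0 v ->
  W (g ^+ p * v - v * g ^+ p).
Proof.
move=> charFp W_sub W_exp g0 v0; set w := g * v - v * g.
have w0 : in_k0 w by apply: in_k0B; apply: in_k0M.
pose q i := ((w%:P * 'X + g%:P) ^+ p)`_i.
have exp_q (c : k) : (g + c *: w) ^+ p = \sum_(i < p.+1) c ^+ i *: q i.
  rewrite addrC -mul_malgC malgC_comm linear_exp_horner => [|y];
    last exact: malgC_comm.
  by apply: eq_bigr => i _; rewrite -rmorphXn /= -malgC_comm mul_malgC.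
have [a [b sum_q]] := sum_natr_inv_scale_polyval charFp _ q.
have W_sum : W (a *: q 0%N - q 1%N + b *: q p).
  rewrite -sum_q; under eq_bigr do rewrite -exp_q.
  apply: subspace_sum => // j _; apply: subspaceZ => //; apply: W_exp.
  by apply: in_k0D; last apply: in_k0Z.
have W_q0 : W (q 0%N) by rewrite /q coef_linear_exp0; exact: W_exp.
have W_qp : W (q p) by rewrite /q coef_linear_expn; exact: W_exp.
rewrite -(coef_linear_exp1 _ _ _ _ p (erefl w)) -/(q 1%N).
have -> : q 1%N = a *: q 0%N + b *: q p - (a *: q 0%N - q 1%N + b *: q p).
  by rewrite [_ - q 1%N + _]addrAC subKr.
by apply: subspaceB => //; apply: subspaceD => //; apply: subspaceZ.
Qed.

Lemma setmul_k0 [A B f] : (forall a, A a -> in_k0 a) ->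
  (forall b, B b -> in_k0 b) -> setmul A B f -> in_k0 f.
Proof.
move=> A_k0 B_k0 [a [b [Aa Bb ->]]].
by apply: in_k0M; [apply: A_k0 | apply: B_k0].
Qed.

(* The elements all of whose images under endomorphisms have their commutator
   with [v] in [Tgen A] form a T-space containing [A]. *)
Lemma Tgen_commutator A v : (forall a, A a -> in_k0 a) ->
    (forall a phi, A a -> is_endo phi -> Tgen A (phi a * v - v * phi a)) ->
  forall u, Tgen A u -> Tgen A (u * v - v * u).
Proof.
move=> A_k0 A_comm u Au; have [T_sub _] := Tgen_Tspace A_k0.
pose W f := Tgen A f /\
  forall phi, is_endo phi -> Tgen A (phi f * v - v * phi f).
suff [_ u_comm] : W u by exact: u_comm id endo_id.
apply: Au => [|a Aa]; last by split=> [|phi]; [exact: Tgen_incl | exact: A_comm].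
split; last first.
  move=> psi psi_endo f [Af f_comm]; split=> [|phi phi_endo].
    exact: Tspace_endo (Tgen_Tspace A_k0) psi_endo Af.
  exact: f_comm (phi \o psi) (endo_comp phi_endo psi_endo).
split; first by move=> f [Af _]; exact: Tgen_k0 Af.
split.
  split=> [|phi phi_endo]; first exact: subspace0 T_sub.
  by rewrite endo0 // mul0r mulr0 subrr; exact: subspace0 T_sub.
split=> [f g [Af f_comm] [Ag g_comm]|c f [Af f_comm]].
  split=> [|phi phi_endo]; first exact: subspaceD T_sub Af Ag.
  rewrite (endoD phi_endo (Tgen_k0 A_k0 Af) (Tgen_k0 A_k0 Ag)).
  rewrite mulrDl mulrDr opprD addrACA.
  exact: subspaceD T_sub (f_comm _ phi_endo) (g_comm _ phi_endo).
split=> [|phi phi_endo]; first exact: (subspaceZ c T_sub Af).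
rewrite (endoZ c phi_endo (Tgen_k0 A_k0 Af)) -scalerAl malg_scalerAr -scalerBr.
exact: (subspaceZ c T_sub (f_comm _ phi_endo)).
Qed.

End NonUnitalPart.

Section HSpaces.
Variables (k : fieldType) (p : nat).
Hypothesis charFp : p \in [pchar k].
Local Notation F := (FA k).
Implicit Types f u v : F.

Let p_gt0 : (0 < p)%N := prime_gt0 (pcharf_prime charFp).

Lemma H1_gen_k0 (a : F) : a = xvar k 1 ^+ p -> in_k0 a.
Proof. by move=> ->; rewrite -(prednK p_gt0); apply/in_k0X/in_k0_xvar. Qed.

Lemma H1_k0 [f] : H1 p f -> in_k0 f.
Proof. exact: Tgen_k0 H1_gen_k0. Qed.

Lemma Hs_k0 [n f] : Hs p n f -> in_k0 f.
Proof.
elim: n f => [|n IHn] f; first exact: H1_k0.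
by apply: Tgen_k0 => a; apply: setmul_k0 IHn H1_k0.
Qed.

Lemma Hs_Tspace n : is_Tspace (@Hs k p n).
Proof.
case: n => [|n]; first exact: Tgen_Tspace H1_gen_k0.
by apply: Tgen_Tspace => a; apply: setmul_k0 (@Hs_k0 n) H1_k0.
Qed.

Lemma H1_expr f : in_k0 f -> H1 p (f ^+ p).
Proof.
have := Tspace_expr 1 p.-1 f (Hs_Tspace 0); rewrite prednK //.
by apply; exact: Tgen_incl.
Qed.

Lemma H1_commutator u v : H1 p u -> in_k0 v -> H1 p (u * v - v * u).
Proof.
move=> H1u v0; apply: Tgen_commutator H1_gen_k0 _ u H1u => _ phi -> phi_endo.
have [H1_sub _] := Hs_Tspace 0; have x_k0 := @in_k0_xvar k 1.
rewrite -(prednK p_gt0) endoX // prednK //.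
exact: subspace_commutator_expr charFp H1_sub H1_expr (endo_k0 phi_endo x_k0) v0.
Qed.

Lemma Hs_commutator n u v : Hs p n u -> in_k0 v -> Hs p n (u * v - v * u).
Proof.
elim: n u => [|n IHn] u; first exact: H1_commutator.
move=> Hu v0; apply: Tgen_commutator (fun a => setmul_k0 (@Hs_k0 n) H1_k0) _ u Hu.
move=> _ phi [b [c [Hb H1c ->]]] phi_endo.
have [b0 c0] := (Hs_k0 Hb, H1_k0 H1c).
have Hb' : Hs p n (phi b) by exact: Tspace_endo (Hs_Tspace n) phi_endo Hb.
have H1c' : H1 p (phi c) by exact: Tspace_endo (Hs_Tspace 0) phi_endo H1c.
have [Hsub _] := Hs_Tspace n.+1.
have leibniz (x y : F) :
    x * y * v - v * (x * y) = x * (y * v - v * y) + (x * v - v * x) * y.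
  by rewrite mulrBr mulrBl !mulrA addrA subrK.
rewrite endoM // leibniz.
apply: (subspaceD Hsub); apply: Tgen_incl.
  by exists (phi b), (phi c * v - v * phi c); split=> //; exact: H1_commutator.
by exists (phi b * v - v * phi b), (phi c); split=> //; exact: IHn.
Qed.

End HSpaces.

Theorem lemma4p4 (k : fieldType) (p : nat) (hp : p \in [pchar k]) (m : nat)
  (hm : (1 <= m)%N) (u v : FA k) :
  H p m u -> in_k0 v -> H p m (u * v - v * u).
Proof.
exact: Hs_commutator.
Qed.
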